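(* Let $q_1,q_2,q_3,q_4\in\widehat{\mathbb H}$ be four distinct points and let $q'_1,q'_2,q'_3,q'_4\in\widehat{\mathbb H}$ be another quadruple of distinct points. Then there exists a fractional linear transformation $T$ of $\widehat{\mathbb H}$ with $T(q_n)=q'_n$ for $n=1,2,3,4$ if and only if $$R_{\mathbb H}(q_1,q_2,q_3,q_4)=R_{\mathbb H}(q'_1,q'_2,q'_3,q'_4).$$
   Context: $\mathbb H$ denotes the quaternions, with conjugate $\bar q$, norm $|q|=\sqrt{q\bar q}$, real part $\operatorname{Re} q=(q+\bar q)/2$; $\widehat{\mathbb H}=\mathbb H\cup\{\infty\}$. The group $GL(2,\mathbb H)$ of invertible $2\times 2$ quaternionic matrices acts on $\widehat{\mathbb H}$ by fractional linear transformations $\pi(\gamma)(q)=(aq+b)(cq+d)^{-1}$ for $\gamma=\begin{pmatrix}a&b\\c&d\end{pmatrix}$; a fractional linear transformation is a map of the form $\pi(\gamma)$. For four distinct points $q_1,q_2,q_3,q_4\in\widehat{\mathbb H}$ the cross-ratio is $Q(q_1,q_2,q_3,q_4)=(q_2-q_1)^{-1}(q_4-q_1)(q_4-q_3)^{-1}(q_2-q_3)\in\mathbb H$, where if some $q_n=\infty$ the value is defined by letting $q_n\to\infty$ and taking the limit. Define $R_{\mathbb H}(q_1,q_2,q_3,q_4)=\bigl(|Q(q_1,q_2,q_3,q_4)|,\operatorname{Re}Q(q_1,q_2,q_3,q_4)\bigr)\in\mathbb R^2$. *)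

From mathcomp Require Import all_boot all_order all_algebra.
From mathcomp Require Import reals.
Set Implicit Arguments. Unset Strict Implicit. Unset Printing Implicit Defensive.
Import Order.TTheory GRing.Theory Num.Theory.
Local Open Scope ring_scope.

Section Quat.
Variable R : realType.

Record quat := Quat { qre : R; qi : R; qj : R; qk : R }.

Definition qadd (p q : quat) : quat :=
  Quat (qre p + qre q) (qi p + qi q) (qj p + qj q) (qk p + qk q).
Definition qopp (p : quat) : quat := Quat (- qre p) (- qi p) (- qj p) (- qk p).
Definition qsub (p q : quat) : quat := qadd p (qopp q).
Definition qzero : quat := Quat 0 0 0 0.
Definition qone : quat := Quat 1 0 0 0.

Definition qmul (p q : quat) : quat :=
  Quat (qre p * qre q - qi p * qi q - qj p * qj q - qk p * qk q)
       (qre p * qi q + qi p * qre q + qj p * qk q - qk p * qj q)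
       (qre p * qj q - qi p * qk q + qj p * qre q + qk p * qi q)
       (qre p * qk q + qi p * qj q - qj p * qi q + qk p * qre q).

Definition qconj (p : quat) : quat := Quat (qre p) (- qi p) (- qj p) (- qk p).
Definition qnorm2 (p : quat) : R := qre p ^+ 2 + qi p ^+ 2 + qj p ^+ 2 + qk p ^+ 2.
Definition qnorm (p : quat) : R := Num.sqrt (qnorm2 p).
(** inverse q^{-1} = conj q / |q|^2 (only used for q <> 0) *)
Definition qinv (p : quat) : quat :=
  let n := qnorm2 p in
  Quat (qre p / n) (- qi p / n) (- qj p / n) (- qk p / n).
Definition qRe (p : quat) : R := qre p.

Definition qeqb (p q : quat) : bool :=
  [&& qre p == qre q, qi p == qi q, qj p == qj q & qk p == qk q].

(** Extended quaternions  \hat H = H ∪ {∞}:  Some q is q, None is ∞. *)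
Definition Hhat := option quat.

Record mat2 := Mat2 { ma : quat; mb : quat; mc : quat; md : quat }.
Definition mmul (g h : mat2) : mat2 :=
  Mat2 (qadd (qmul (ma g) (ma h)) (qmul (mb g) (mc h)))
       (qadd (qmul (ma g) (mb h)) (qmul (mb g) (md h)))
       (qadd (qmul (mc g) (ma h)) (qmul (md g) (mc h)))
       (qadd (qmul (mc g) (mb h)) (qmul (md g) (md h))).
Definition mid : mat2 := Mat2 qone qzero qzero qone.
Definition invertible (g : mat2) : Prop :=
  exists h, mmul g h = mid /\ mmul h g = mid.

(** The action pi(g)(q) = (a q + b)(c q + d)^{-1} on \hat H, extended
    (by continuity) to q = ∞ and to the pole c q + d = 0. *)
Definition flt (g : mat2) (x : Hhat) : Hhat :=
  match x with
  | Some q =>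
      let den := qadd (qmul (mc g) q) (md g) in
      if qeqb den qzero then None
      else Some (qmul (qadd (qmul (ma g) q) (mb g)) (qinv den))
  | None => if qeqb (mc g) qzero then None else Some (qmul (ma g) (qinv (mc g)))
  end.

Definition is_flt (T : Hhat -> Hhat) : Prop :=
  exists g, invertible g /\ forall x, T x = flt g x.

Definition crossQ (q1 q2 q3 q4 : quat) : quat :=
  qmul (qmul (qmul (qinv (qsub q2 q1)) (qsub q4 q1)) (qinv (qsub q4 q3)))
       (qsub q2 q3).

(** R_H(q1,q2,q3,q4) = (|Q|, Re Q), with the values at ∞ obtained as limits
    q_n -> ∞ (at most one point is ∞ since the points are distinct):
    - q1 = ∞ : Q -> (q4-q3)^{-1}(q2-q3)
    - q3 = ∞ : Q -> (q2-q1)^{-1}(q4-q1)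
    - q4 = ∞ : Q -> (q2-q1)^{-1}(q2-q3)
    - q2 = ∞ : Q is asymptotic to q2^{-1} A q2 with A = (q4-q1)(q4-q3)^{-1};
      |Q| -> |A| and Re Q -> Re A (both conjugation invariant), so R_H -> (|A|, Re A). *)
Definition RQ (Q : quat) : R * R := (qnorm Q, qRe Q).

Definition RH (x1 x2 x3 x4 : Hhat) : R * R :=
  match x1, x2, x3, x4 with
  | Some q1, Some q2, Some q3, Some q4 => RQ (crossQ q1 q2 q3 q4)
  | None, Some q2, Some q3, Some q4 => RQ (qmul (qinv (qsub q4 q3)) (qsub q2 q3))
  | Some q1, None, Some q3, Some q4 => RQ (qmul (qsub q4 q1) (qinv (qsub q4 q3)))
  | Some q1, Some q2, None, Some q4 => RQ (qmul (qinv (qsub q2 q1)) (qsub q4 q1))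
  | Some q1, Some q2, Some q3, None => RQ (qmul (qinv (qsub q2 q1)) (qsub q2 q3))
  | _, _, _, _ => (0, 0) (* not reached for distinct points *)
  end.

Definition distinct4 (x1 x2 x3 x4 : Hhat) : Prop :=
  x1 <> x2 /\ x1 <> x3 /\ x1 <> x4 /\ x2 <> x3 /\ x2 <> x4 /\ x3 <> x4.

End Quat.

(* Points of the extended quaternions are right lines in H^2, on which GL(2,H)
   acts linearly, and [flt g] is the induced action on lines.  A difference
   q_j - q_i is the pairing of the line of q_j with the annihilator of q_i;
   under g it acquires a nonzero left factor depending only on q_i and a right
   factor depending only on q_j.  In the cross-ratio these factors cancel
   except for a conjugation Q |-> l^-1 Q l, and |Q| and Re Q are conjugation
   invariants.  Conversely, send q1, q2, q3 to 0, 1, oo; then q4 goes to Q.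
   Quaternions with equal norm and real part are conjugate, l w l^-1 = w', and
   q |-> l q l^-1 fixes 0, 1 and oo, so composing the normalisations of the two
   quadruples with this conjugation gives the required transformation. *)

From HB Require Import structures.
From mathcomp Require Import all_boot all_order all_algebra.
From mathcomp Require Import reals.
From mathcomp Require Import ring lra.
Set Implicit Arguments. Unset Strict Implicit. Unset Printing Implicit Defensive.
Import Order.TTheory GRing.Theory Num.Theory.
Local Open Scope ring_scope.

Section QuaternionRing.
Variable R : realType.
Local Notation H := (quat R).

Definition quat_tuple (p : H) := (qre p, qi p, qj p, qk p).
Definition tuple_quat (t : R * R * R * R) := let: (a, b, c, d) := t in Quat a b c d.
Lemma quat_tupleK : cancel quat_tuple tuple_quat. Proof. by case. Qed.
HB.instance Definition _ := Choice.copy H (can_type quat_tupleK).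

Lemma quat_eq (a b c d a' b' c' d' : R) :
  a = a' -> b = b' -> c = c' -> d = d' -> Quat a b c d = Quat a' b' c' d'.
Proof. by move=> -> -> -> ->. Qed.

Ltac quat_ring := repeat match goal with [ p : quat R |- _ ] => destruct p end;
  rewrite /qadd /qmul /qopp /qzero /qone /=; apply: quat_eq; ring.

Lemma qaddA : associative (@qadd R). Proof. move=> *; quat_ring. Qed.
Lemma qaddC : commutative (@qadd R). Proof. move=> *; quat_ring. Qed.
Lemma qadd0 : left_id (qzero R) (@qadd R). Proof. move=> *; quat_ring. Qed.
Lemma qaddN : left_inverse (qzero R) (@qopp R) (@qadd R). Proof. move=> *; quat_ring. Qed.
Lemma qmulA : associative (@qmul R). Proof. move=> *; quat_ring. Qed.
Lemma qmul1 : left_id (qone R) (@qmul R). Proof. move=> *; quat_ring. Qed.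
Lemma qmulr1 : right_id (qone R) (@qmul R). Proof. move=> *; quat_ring. Qed.
Lemma qmulDl : left_distributive (@qmul R) (@qadd R). Proof. move=> *; quat_ring. Qed.
Lemma qmulDr : right_distributive (@qmul R) (@qadd R). Proof. move=> *; quat_ring. Qed.
Lemma qone_neq0 : qone R != qzero R.
Proof. by apply/eqP => -[] /eqP; rewrite oner_eq0. Qed.

HB.instance Definition _ := GRing.isNzRing.Build H
  qaddA qaddC qadd0 qaddN qmulA qmul1 qmulr1 qmulDl qmulDr qone_neq0.

Lemma qnorm2_eq0 (p : H) : (qnorm2 p == 0) = (p == 0).
Proof.
case: p => a b c d; rewrite /qnorm2 /= !paddr_eq0 ?addr_ge0 ?sqr_ge0 // !sqrf_eq0.
apply/idP/eqP => [/andP[/andP[/andP[/eqP-> /eqP->] /eqP->] /eqP->] //|[-> -> -> ->]].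
by rewrite !eqxx.
Qed.

Lemma qnorm2_ge0 (p : H) : 0 <= qnorm2 p.
Proof. by rewrite /qnorm2 !addr_ge0 ?sqr_ge0. Qed.

Lemma qmulV : {in [pred p : H | p != 0], left_inverse 1 (@qinv R) *%R}.
Proof.
move=> p; rewrite inE -qnorm2_eq0; case: p => a b c d; rewrite /qnorm2 /= => p0.
by rewrite /GRing.mul /= /qmul /qinv /qnorm2 /=; apply: quat_eq; field.
Qed.

Lemma qmulVr : {in [pred p : H | p != 0], right_inverse 1 (@qinv R) *%R}.
Proof.
move=> p; rewrite inE -qnorm2_eq0; case: p => a b c d; rewrite /qnorm2 /= => p0.
by rewrite /GRing.mul /= /qmul /qinv /qnorm2 /=; apply: quat_eq; field.
Qed.

Lemma qunitP (p q : H) : q * p = 1 /\ p * q = 1 -> p \in [pred p : H | p != 0].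
Proof.
move=> [_ pq1]; rewrite inE; apply/eqP => p0.
by move: pq1; rewrite p0 mul0r => /eqP; rewrite eq_sym oner_eq0.
Qed.

Lemma qinv0 : {in [predC [pred p : H | p != 0]], (@qinv R) =1 id}.
Proof.
move=> p; rewrite !inE negbK => /eqP ->.
by rewrite /qinv /qnorm2 /=; apply: quat_eq; rewrite /= ?oppr0 !mul0r.
Qed.

HB.instance Definition _ := GRing.NzRing_hasMulInverse.Build H qmulV qmulVr qunitP qinv0.

Lemma qunitE (p : H) : (p \is a GRing.unit) = (p != 0). Proof. by []. Qed.
Lemma qmulIr (l : H) : l != 0 -> injective ( *%R^~ l).
Proof. by move=> l0; apply: mulIr; rewrite qunitE. Qed.
Lemma qmulE (p q : H) : qmul p q = p * q. Proof. by []. Qed.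
Lemma qsubE (p q : H) : qsub p q = p - q. Proof. by []. Qed.
Lemma qinvE (p : H) : qinv p = p^-1. Proof. by []. Qed.

Lemma qeqbE (p q : H) : qeqb p q = (p == q).
Proof.
case: p q => a b c d [a' b' c' d']; rewrite /qeqb /=.
apply/idP/eqP => [/and4P[/eqP-> /eqP-> /eqP-> /eqP->] //|[-> -> -> ->]].
by rewrite !eqxx.
Qed.

End QuaternionRing.

Section ConjugationInvariants.
Variable R : realType.
Local Notation H := (quat R).

Lemma qnorm2M (p q : H) : qnorm2 (p * q) = qnorm2 p * qnorm2 q.
Proof. by case: p q => a b c d [a' b' c' d']; rewrite -qmulE /qnorm2 /qmul /=; ring. Qed.

Lemma qRe_mulC (p q : H) : qRe (p * q) = qRe (q * p).
Proof. by case: p q => a b c d [a' b' c' d']; rewrite -!qmulE /qRe /qmul /=; ring. Qed.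

Lemma RQ_mulC (p q : H) : RQ (p * q) = RQ (q * p).
Proof. by rewrite /RQ /qnorm !qnorm2M mulrC qRe_mulC. Qed.

Lemma RQ_conj (l w : H) : l != 0 -> RQ (l^-1 * w * l) = RQ w.
Proof. by move=> l0; rewrite RQ_mulC mulrA divrr ?mul1r. Qed.

(* For non-real [w], at least one of the commutators [[i, w]], [[j, w]] is
   nonzero, and it conjugates [w] to its conjugate. *)
Lemma quat_conj_conjugate (w : H) : exists2 l, l != 0 & l * w = qconj w * l.
Proof.
pose i := Quat (0 : R) 1 0 0; pose j := Quat (0 : R) 0 1 0.
have [iw0|iw0] := eqVneq (i * w - w * i) 0; last first.
  exists (i * w - w * i) => //; case: w {iw0} => a b c d.
  by rewrite /i -!qmulE -!qsubE /qsub /qmul /qadd /qopp /qconj /=; apply: quat_eq; ring.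
have [jw0|jw0] := eqVneq (j * w - w * j) 0; last first.
  exists (j * w - w * j) => //; case: w {iw0 jw0} => a b c d.
  by rewrite /j -!qmulE -!qsubE /qsub /qmul /qadd /qopp /qconj /=; apply: quat_eq; ring.
exists 1; rewrite ?oner_eq0 // mul1r mulr1; move: iw0 jw0; case: w => a b c d.
rewrite /i /j -!qmulE -!qsubE /qsub /qmul /qadd /qopp /qconj /=.
by move=> [] _ _ e3 e4 [] _ _ _ f4; apply: quat_eq; lra.
Qed.

(* [l = w' - conj w] always intertwines [w] and [w']; it vanishes only when
   [w' = conj w]. *)
Lemma RQ_eq_conjugate (w w' : H) :
  RQ w = RQ w' -> exists2 l, l != 0 & l * w = w' * l.
Proof.
rewrite /RQ /qnorm => -[sqrt_eq Re_eq].
have norm_eq : qnorm2 w = qnorm2 w'.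
  by rewrite -(sqr_sqrtr (qnorm2_ge0 w)) -(sqr_sqrtr (qnorm2_ge0 w')) sqrt_eq.
have [l0|l0] := eqVneq (w' - qconj w) 0.
  by move/eqP: l0; rewrite subr_eq0 => /eqP->; apply: quat_conj_conjugate.
exists (w' - qconj w) => //; move: norm_eq Re_eq {sqrt_eq l0}.
case: w => a b c d; case: w' => a' b' c' d'; rewrite /qnorm2 /qRe /=.
move=> norm_eq Re_eq; subst a'.
rewrite -!qmulE -!qsubE /qsub /qmul /qadd /qopp /qconj /=.
by apply: quat_eq; try ring; nra.
Qed.

End ConjugationInvariants.

Section HomogeneousCoordinates.
Variable R : realType.
Local Notation H := (quat R).
Local Notation Hhat := (Hhat R).

(* [hcol x] spans the line of [x], and [hrow x] annihilates it. *)
Definition hcol (x : Hhat) : H * H := if x is Some q then (q, 1) else (1, 0).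
Definition hrow (x : Hhat) : H * H := if x is Some q then (1, - q) else (0, 1).
Definition vdot (r z : H * H) : H := r.1 * z.1 + r.2 * z.2.
Definition vscale (z : H * H) (l : H) : H * H := (z.1 * l, z.2 * l).
Definition lscale (l : H) (r : H * H) : H * H := (l * r.1, l * r.2).
Definition mulmv (g : mat2 R) (z : H * H) : H * H :=
  (ma g * z.1 + mb g * z.2, mc g * z.1 + md g * z.2).
Definition mulvm (r : H * H) (g : mat2 R) : H * H :=
  (r.1 * ma g + r.2 * mc g, r.1 * mb g + r.2 * md g).

Definition hdiff (x y : Hhat) : H := vdot (hrow x) (hcol y).

Lemma mmulE (g h : mat2 R) : mmul g h =
  Mat2 (ma g * ma h + mb g * mc h) (ma g * mb h + mb g * md h)
       (mc g * ma h + md g * mc h) (mc g * mb h + md g * md h).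
Proof. by []. Qed.

Lemma midE : mid R = Mat2 1 0 0 1. Proof. by []. Qed.

Lemma mulmv_mmul g h z : mulmv (mmul g h) z = mulmv g (mulmv h z).
Proof.
by case: z => u v; rewrite /mulmv mmulE /=; congr pair;
  rewrite !mulrDl !mulrDr !mulrA addrACA.
Qed.

Lemma mulvm_mmul r g h : mulvm r (mmul g h) = mulvm (mulvm r g) h.
Proof.
by case: r => u v; rewrite /mulvm mmulE /=; congr pair;
  rewrite !mulrDl !mulrDr !mulrA addrACA.
Qed.

Lemma vdot_mulmv r g z : vdot r (mulmv g z) = vdot (mulvm r g) z.
Proof.
by case: r z => u v [x y]; rewrite /vdot /mulvm /mulmv /= !mulrDl !mulrDr !mulrA addrACA.
Qed.

Lemma mulmv_mid z : mulmv (mid R) z = z.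
Proof. by case: z => u v; rewrite /mulmv midE /= !mul1r !mul0r addr0 add0r. Qed.

Lemma mulvm_mid r : mulvm r (mid R) = r.
Proof. by case: r => u v; rewrite /mulvm midE /= !mulr1 !mulr0 addr0 add0r. Qed.

Lemma mulvm0 g : mulvm (0, 0) g = (0, 0).
Proof. by rewrite /mulvm /= !mul0r addr0. Qed.

Lemma mulmv_scale g z l : mulmv g (vscale z l) = vscale (mulmv g z) l.
Proof. by case: z => u v; rewrite /mulmv /vscale /= !mulrDl !mulrA. Qed.

Lemma vscaleA z a b : vscale (vscale z a) b = vscale z (a * b).
Proof. by case: z => u v; rewrite /vscale /= !mulrA. Qed.

Lemma vdot_scale r z l : vdot r (vscale z l) = vdot r z * l.
Proof. by rewrite /vdot /vscale /= mulrDl !mulrA. Qed.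

Lemma vdot_lscale l r z : vdot (lscale l r) z = l * vdot r z.
Proof. by rewrite /vdot /lscale /= mulrDr !mulrA. Qed.

Lemma hdiffxx x : hdiff x x = 0.
Proof.
by case: x => [q|]; rewrite /hdiff /vdot /= ?mul1r ?mulr1 ?mulr0 ?mul0r ?addr0 ?subrr.
Qed.

Lemma hdiffSS q p : hdiff (Some q) (Some p) = p - q.
Proof. by rewrite /hdiff /vdot /= mul1r mulr1. Qed.

Lemma hdiffNS p : hdiff None (Some p) = 1.
Proof. by rewrite /hdiff /vdot /= mul0r add0r mul1r. Qed.

Lemma hdiffSN p : hdiff (Some p) None = 1.
Proof. by rewrite /hdiff /vdot /= mulr0 addr0 mul1r. Qed.

Lemma hdiff_neq0 x y : x <> y -> hdiff x y != 0.
Proof.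
case: x => [q|]; case: y => [p|] //= xy.
- by rewrite hdiffSS subr_eq0; apply: contra_notN xy => /eqP->.
- by rewrite hdiffSN oner_eq0.
- by rewrite hdiffNS oner_eq0.
Qed.

Lemma hcol_scale_neq0 x l : l != 0 -> vscale (hcol x) l <> (0, 0).
Proof.
move=> l0; case: x => [q|] e; [have := congr1 snd e | have := congr1 fst e];
by rewrite /= mul1r => l0'; rewrite l0' eqxx in l0.
Qed.

Lemma hcol_neq0 x : hcol x <> (0, 0).
Proof.
case: x => [q|] e; [have /eqP := congr1 snd e | have /eqP := congr1 fst e];
by rewrite /= oner_eq0.
Qed.

Lemma hrow_neq0 x : hrow x <> (0, 0).
Proof.
case: x => [q|] e; [have /eqP := congr1 fst e | have /eqP := congr1 snd e];
by rewrite /= oner_eq0.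
Qed.

Lemma hcol_scale_inj x y l l' : l != 0 ->
  vscale (hcol x) l = vscale (hcol y) l' -> x = y.
Proof.
move=> l0 e; have e1 := congr1 fst e; have e2 := congr1 snd e; move: e1 e2 {e}.
case: x => [q|]; case: y => [p|] //=; rewrite ?mul1r ?mul0r => e1 e2.
- by subst l'; congr Some; apply: (qmulIr l0).
- by rewrite e2 eqxx in l0.
- by rewrite e1 -e2 mulr0 eqxx in l0.
Qed.

Lemma fltS (g : mat2 R) (q : H) : flt g (Some q) =
  if mc g * q + md g == 0 then None
  else Some ((ma g * q + mb g) * (mc g * q + md g)^-1).
Proof. by rewrite /flt qeqbE. Qed.

Lemma fltN (g : mat2 R) : flt g None = if mc g == 0 then None else Some (ma g * (mc g)^-1).
Proof. by rewrite /flt qeqbE. Qed.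

Lemma mulmv_hcol (g : mat2 R) x : mulmv g (hcol x) <> (0, 0) ->
  exists2 l, l != 0 & mulmv g (hcol x) = vscale (hcol (flt g x)) l.
Proof.
case: x => [q|]; rewrite /mulmv [hcol _]/= [(_, _).1]/= [(_, _).2]/=.
- rewrite fltS !mulr1; case: eqP => den0 nz.
  + exists (ma g * q + mb g); last by rewrite /vscale /= mul1r mul0r den0.
    by apply: contra_notN nz => /eqP->; rewrite den0.
  + by exists (mc g * q + md g); [apply/eqP | rewrite /vscale /= mul1r divrK //; apply/eqP].
- rewrite fltN !mulr0 !mulr1 !addr0; case: eqP => c0 nz.
  + exists (ma g); last by rewrite /vscale /= mul1r mul0r c0.
    by apply: contra_notN nz => /eqP->; rewrite c0.
  + by exists (mc g); [apply/eqP | rewrite /vscale /= mul1r divrK //; apply/eqP].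
Qed.

Lemma flt_mulmv (g : mat2 R) x y l : l != 0 -> mulmv g (hcol x) = vscale (hcol y) l -> flt g x = y.
Proof.
move=> l0 gx; have nz : mulmv g (hcol x) <> (0, 0) by rewrite gx; apply: hcol_scale_neq0.
have [l' l'0 gx'] := mulmv_hcol nz.
by apply: (@hcol_scale_inj _ _ l' l) => //; rewrite -gx'.
Qed.

Lemma invertible_mulmv_neq0 (g : mat2 R) z : invertible g -> z <> (0, 0) -> mulmv g z <> (0, 0).
Proof.
move=> [h [_ hg]] z0 gz; apply: z0.
by rewrite -(mulmv_mid z) -hg mulmv_mmul gz /mulmv /= !mulr0 !addr0.
Qed.

Lemma mulmv_hcol_invertible (g : mat2 R) x : invertible g ->
  exists2 l, l != 0 & mulmv g (hcol x) = vscale (hcol (flt g x)) l.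
Proof. by move=> ig; apply/mulmv_hcol/invertible_mulmv_neq0/hcol_neq0. Qed.

Lemma flt_mmul (g h : mat2 R) x : invertible g -> invertible h ->
  flt (mmul g h) x = flt g (flt h x).
Proof.
move=> ig ih; have [l l0 hx] := mulmv_hcol_invertible x ih.
have [l' l'0 ghx] := mulmv_hcol_invertible (flt h x) ig.
apply: (@flt_mulmv _ _ _ (l' * l)); first by rewrite -qunitE unitrMl.
by rewrite mulmv_mmul hx mulmv_scale ghx vscaleA.
Qed.

Lemma flt_mid x : flt (mid R) x = x.
Proof.
apply: (@flt_mulmv _ _ _ 1); rewrite ?oner_eq0 // mulmv_mid /vscale !mulr1.
by case: (hcol x).
Qed.

Lemma flt_inj (g : mat2 R) : invertible g -> injective (flt g).
Proof.
move=> ig x y gxy; have [h [gh hg]] := ig.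
have ih : invertible h by exists g.
by rewrite -(flt_mid x) -(flt_mid y) -hg !flt_mmul // gxy.
Qed.

Lemma hrow_flt (g : mat2 R) x : invertible g ->
  exists2 m, m != 0 & hrow x = mulvm (lscale m (hrow (flt g x))) g.
Proof.
move=> ig; have [h [gh hg]] := ig.
have [l l0 gx] := mulmv_hcol_invertible x ig.
set r := mulvm (hrow x) h.
have rg : mulvm r g = hrow x by rewrite /r -mulvm_mmul hg mulvm_mid.
have r_gx : vdot r (hcol (flt g x)) = 0.
  apply: (qmulIr l0); rewrite mul0r -vdot_scale -gx vdot_mulmv rg; exact: hdiffxx.
have r0 : r <> (0, 0) by move=> r0; apply: (@hrow_neq0 x); rewrite -rg r0 mulvm0.
move: r rg r_gx r0 => [a b] rg; case: (flt g x) => [p|]; rewrite /vdot /=.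
- rewrite mulr1 => /eqP; rewrite addrC addr_eq0 => /eqP b_eq r0.
  exists a; last by rewrite -rg b_eq /lscale /= mulr1 mulrN.
  by apply: contra_notN r0 => /eqP a0; rewrite b_eq a0 mul0r oppr0.
- rewrite mulr0 addr0 mulr1 => a0 r0.
  exists b; last by rewrite -rg a0 /lscale /= mulr0 mulr1.
  by apply: contra_notN r0 => /eqP b0; rewrite a0 b0.
Qed.

Lemma hdiff_flt (g : mat2 R) x y m l :
  hrow x = mulvm (lscale m (hrow (flt g x))) g ->
  mulmv g (hcol y) = vscale (hcol (flt g y)) l ->
  hdiff x y = m * hdiff (flt g x) (flt g y) * l.
Proof. by move=> gx gy; rewrite /hdiff gx -vdot_mulmv gy vdot_scale vdot_lscale. Qed.

End HomogeneousCoordinates.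

Section CrossRatio.
Variable R : realType.
Local Notation H := (quat R).
Local Notation Hhat := (Hhat R).

Definition hcross (x1 x2 x3 x4 : Hhat) : H :=
  (hdiff x1 x2)^-1 * hdiff x1 x4 * (hdiff x3 x4)^-1 * hdiff x3 x2.

Lemma RH_hcross x1 x2 x3 x4 : distinct4 x1 x2 x3 x4 ->
  RH x1 x2 x3 x4 = RQ (hcross x1 x2 x3 x4).
Proof.
case: x1 => [q1|]; case: x2 => [q2|]; case: x3 => [q3|]; case: x4 => [q4|];
move=> [d12 [d13 [d14 [d23 [d24 d34]]]]] //;
by rewrite /RH /hcross ?hdiffSS ?hdiffSN ?hdiffNS /crossQ ?qmulE ?qinvE ?qsubE
  ?invr1 ?mul1r ?mulr1.
Qed.

Lemma cross_rescale (m1 m3 l2 l4 a b c d : H) :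
  m1 != 0 -> m3 != 0 -> l2 != 0 -> l4 != 0 -> a != 0 -> c != 0 ->
  (m1 * a * l2)^-1 * (m1 * b * l4) * (m3 * c * l4)^-1 * (m3 * d * l2) =
  l2^-1 * (a^-1 * b * c^-1 * d) * l2.
Proof.
rewrite -!qunitE => m1u m3u l2u l4u au cu.
by rewrite !invrM ?unitrMl // !mulrA mulrVK // mulrK // mulrVK.
Qed.

(* The rescalings of [hdiff] under [g] turn [hcross] into a conjugate of itself. *)
Lemma RQ_hcross_flt (g : mat2 R) x1 x2 x3 x4 : invertible g -> distinct4 x1 x2 x3 x4 ->
  RQ (hcross (flt g x1) (flt g x2) (flt g x3) (flt g x4)) = RQ (hcross x1 x2 x3 x4).
Proof.
move=> ig [d12 [d13 [d14 [d23 [d24 d34]]]]].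
have [m1 m10 gx1] := hrow_flt x1 ig; have [m3 m30 gx3] := hrow_flt x3 ig.
have [l2 l20 gx2] := mulmv_hcol_invertible x2 ig.
have [l4 l40 gx4] := mulmv_hcol_invertible x4 ig.
have diff_g_neq0 x y : x <> y -> hdiff (flt g x) (flt g y) != 0.
  by move=> xy; apply: hdiff_neq0 => /(flt_inj ig).
rewrite /hcross (hdiff_flt gx1 gx2) (hdiff_flt gx1 gx4).
rewrite (hdiff_flt gx3 gx4) (hdiff_flt gx3 gx2).
by rewrite cross_rescale ?diff_g_neq0 // RQ_conj.
Qed.

End CrossRatio.

Section NormalForm.
Variable R : realType.
Local Notation H := (quat R).
Local Notation Hhat := (Hhat R).

Lemma mmulA : associative (@mmul R).
Proof.
by move=> g h k; rewrite !mmulE /=; congr Mat2; rewrite !mulrDl !mulrDr !mulrA addrACA.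
Qed.

Lemma mmul1 : left_id (mid R) (@mmul R).
Proof. by case=> a b c d; rewrite mmulE midE /= !mul1r !mul0r !addr0 !add0r. Qed.

Lemma invertible_mmul (g h : mat2 R) : invertible g -> invertible h -> invertible (mmul g h).
Proof.
move=> [g' [gg' g'g]] [h' [hh' h'h]]; exists (mmul h' g'); split.
- by rewrite -mmulA (mmulA h) hh' mmul1.
- by rewrite -mmulA (mmulA g') g'g mmul1.
Qed.

Lemma invertible_flt_inv (g : mat2 R) : invertible g ->
  exists2 h, invertible h & forall x, flt h (flt g x) = x.
Proof.
move=> ig; have [h [gh hg]] := ig; have ih : invertible h by exists g.
by exists h => // x; rewrite -flt_mmul // hg flt_mid.
Qed.

Lemma invertible_triangular (a b d : H) : a != 0 -> d != 0 -> invertible (Mat2 a b 0 d).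
Proof.
rewrite -!qunitE => au du; exists (Mat2 a^-1 (- (a^-1 * b * d^-1)) 0 d^-1).
rewrite !mmulE midE /= !(mul0r, mulr0, addr0, add0r) mulrN !mulrA.
by rewrite !divrr // !mulVr // mul1r addNr mulNr mulrVK // addrN.
Qed.

Lemma invertible_swap (q : H) : invertible (Mat2 0 1 1 (- q)).
Proof.
exists (Mat2 q 1 1 0); rewrite !mmulE midE /= !(mul0r, mulr0, mul1r, mulr1, add0r, addr0).
by rewrite subrr.
Qed.

Lemma flt_scalar (l q : H) : l != 0 -> flt (Mat2 l 0 0 l) (Some q) = Some (l * q * l^-1).
Proof. by move=> l0; rewrite fltS /= mul0r add0r (negbTE l0) addr0. Qed.

Lemma flt_scalar_inf (l : H) : flt (Mat2 l 0 0 l) None = None.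
Proof. by rewrite fltN /= eqxx. Qed.

Lemma flt_01inf_finite (q1 q2 : H) : q1 != q2 -> exists2 g, invertible g &
  [/\ flt g (Some q1) = Some 0, flt g (Some q2) = Some 1 & flt g None = None].
Proof.
move=> q12; have d0 : q2 - q1 != 0 by rewrite subr_eq0 eq_sym.
exists (Mat2 1 (- q1) 0 (q2 - q1)); first by apply: invertible_triangular; rewrite ?oner_eq0.
by rewrite !fltS fltN /= !mul0r !add0r (negbTE d0) eqxx !mul1r subrr mul0r divrr.
Qed.

Lemma flt_01inf (x1 x2 x3 : Hhat) : x1 <> x2 -> x1 <> x3 -> x2 <> x3 ->
  exists2 g, invertible g &
  [/\ flt g x1 = Some 0, flt g x2 = Some 1 & flt g x3 = None].
Proof.
case: x3 => [q3|] x12 x13 x23; last first.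
  case: x1 x12 x13 => [q1|] // x12 _; case: x2 x12 x23 => [q2|] // x12 _.
  by apply: flt_01inf_finite; apply: contra_notN x12 => /eqP->.
pose s := Mat2 0 1 1 (- q3); have s_inv : invertible s := invertible_swap q3.
have s3 : flt s (Some q3) = None by rewrite fltS /= mul1r subrr eqxx.
case s1 : (flt s x1) => [p1|]; last by case: x13; apply: (flt_inj s_inv); rewrite s1 s3.
case s2 : (flt s x2) => [p2|]; last by case: x23; apply: (flt_inj s_inv); rewrite s2 s3.
have [u iu [u1 u2 u3]] : exists2 u, invertible u &
    [/\ flt u (Some p1) = Some 0, flt u (Some p2) = Some 1 & flt u None = None].
  by apply: flt_01inf_finite; apply: contra_notN x12 => /eqP p12;
    apply: (flt_inj s_inv); rewrite s1 s2 p12.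
by exists (mmul u s); [exact: invertible_mmul | rewrite !flt_mmul // s1 s2 s3].
Qed.

Lemma flt_normal_form (x1 x2 x3 x4 : Hhat) : distinct4 x1 x2 x3 x4 ->
  exists g w, [/\ invertible g, flt g x1 = Some 0, flt g x2 = Some 1,
    flt g x3 = None & flt g x4 = Some w /\ RH x1 x2 x3 x4 = RQ w].
Proof.
move=> dx; have [x12 [x13 [x14 [x23 [x24 x34]]]]] := dx.
have [g ig [g1 g2 g3]] := flt_01inf x12 x13 x23.
case g4 : (flt g x4) => [w|]; last by case: x34; apply: (flt_inj ig); rewrite g3 g4.
exists g, w; split => //; split => //.
rewrite RH_hcross // -(RQ_hcross_flt ig dx) g1 g2 g3 g4 /hcross !hdiffSS !hdiffNS.
by rewrite !subr0 !invr1 !mul1r !mulr1.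
Qed.

End NormalForm.

Theorem mainTheorem1 (R : realType) (q1 q2 q3 q4 p1 p2 p3 p4 : Hhat R) :
  distinct4 q1 q2 q3 q4 -> distinct4 p1 p2 p3 p4 ->
  ((exists T : Hhat R -> Hhat R,
      is_flt T /\ T q1 = p1 /\ T q2 = p2 /\ T q3 = p3 /\ T q4 = p4)
   <-> RH q1 q2 q3 q4 = RH p1 p2 p3 p4).
Proof.
move=> dq dp; split.
  case=> T [[g [ig gT]] [T1 [T2 [T3 T4]]]].
  by rewrite !RH_hcross // -T1 -T2 -T3 -T4 !gT RQ_hcross_flt.
have [g [w [ig g1 g2 g3 [g4 ->]]]] := flt_normal_form dq.
have [h [w' [ih h1 h2 h3 [h4 ->]]]] := flt_normal_form dp.
move=> /RQ_eq_conjugate [l l0 lw]; have lu : l \is a GRing.unit by rewrite qunitE.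
have [h' ih' h'h] := invertible_flt_inv ih.
have iC : invertible (Mat2 l 0 0 l) by apply: invertible_triangular.
have iCg : invertible (mmul (Mat2 l 0 0 l) g) by apply: invertible_mmul.
pose k := mmul h' (mmul (Mat2 l 0 0 l) g).
exists (flt k); split; first by exists k; split => //; apply: invertible_mmul.
rewrite /k !flt_mmul // g1 g2 g3 g4 !flt_scalar // flt_scalar_inf.
rewrite mulr0 mul0r mulr1 divrr // lw mulrK //.
by rewrite -h1 -h2 -h3 -h4 !h'h.
Qed.
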